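(* Let $H$ be a fixed connected graph, $\{G_n\}$ a sequence of graphs with $N(H,G_n)>0$, and $p_n\in(0,1)$ with $\limsup_np_n<1$. Then: (a) There is a constant $c=c_H>0$ such that $\mathbb P(T(H,G_n)=0)\ge e^{-cp_n^{|V(H)|}N(H,G_n)}$ for all $n$ large enough. (b) If $\liminf_{n\to\infty}\mathbb P(T(H,G_n)=0)>0$, then $\hat N(H,G_n)$ is not consistent for $N(H,G_n)$ and $Z(H,G_n)$ is not asymptotically normal.
   Context: $G_n$ is a simple labeled graph on $V(G_n)=\{1,\dots,|V(G_n)|\}$ with adjacency $(a_{ij})$; $H=(V(H),E(H))$ with $|Aut(H)|$ automorphisms. $V(G_n)_k$ is the set of $k$-tuples of distinct vertices. $M_H(\mathbf s)=\prod_{(i,j)\in E(H)}a_{s_is_j}$, $N(H,G_n)=\frac1{|Aut(H)|}\sum_{\mathbf s\in V(G_n)_{|V(H)|}}M_H(\mathbf s)$. $\{X_v\}$ i.i.d. Bernoulli$(p_n)$, $X_{\mathbf s}=\prod_uX_{s_u}$, $T(H,G_n)=\frac1{|Aut(H)|}\sum_{\mathbf s}M_H(\mathbf s)X_{\mathbf s}$, $\hat N(H,G_n)=p_n^{-|V(H)|}T(H,G_n)$, $Z(H,G_n)=(T(H,G_n)-p_n^{|V(H)|}N(H,G_n))/\sqrt{\mathrm{Var}[T(H,G_n)]}$. Consistency: $\hat N/N\to1$ in probability; asymptotic normality: $Z\to N(0,1)$ in distribution. *)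

From HB Require Import structures.
From mathcomp Require Import all_boot all_order all_algebra all_fingroup.
From mathcomp Require Import all_classical all_reals all_analysis.
Set Implicit Arguments.
Unset Strict Implicit.
Unset Printing Implicit Defensive.
Import Order.TTheory GRing.Theory Num.Theory.
Import numFieldTopology.Exports numFieldNormedType.Exports.
Local Open Scope classical_set_scope.
Local Open Scope ring_scope.

(* A simple graph on the vertex set 'I_k (= {0,...,k-1}, relabelling of
   {1,...,k}): a symmetric irreflexive boolean adjacency relation. *)
Definition simple_graph (k : nat) (E : rel 'I_k) : Prop :=
  irreflexive E /\ symmetric E.

Definition connected_graph (k : nat) (E : rel 'I_k) : Prop :=
  (0 < k)%N /\ forall i j : 'I_k, connect E i j.

Definition autH (k : nat) (H : rel 'I_k) : nat :=
  #|[set s : {perm 'I_k} | [forall i, [forall j, H (s i) (s j) == H i j]]]|.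

Definition inj_tuples (k m : nat) : {set {ffun 'I_k -> 'I_m}} :=
  [set s : {ffun 'I_k -> 'I_m} | injectiveb s].

Definition MH (R : realType) (k m : nat) (H : rel 'I_k) (G : rel 'I_m)
    (s : {ffun 'I_k -> 'I_m}) : R :=
  \prod_(ij : 'I_k * 'I_k | H ij.1 ij.2) ((G (s ij.1) (s ij.2) : nat)%:R).

Definition Ncount (R : realType) (k m : nat) (H : rel 'I_k) (G : rel 'I_m) : R :=
  ((autH H)%:R)^-1 * \sum_(s in inj_tuples k m) MH R H G s.

(* Sample space: the set w of vertices v with X_v = 1. *)
Definition Tcount (R : realType) (k m : nat) (H : rel 'I_k) (G : rel 'I_m)
    (w : {set 'I_m}) : R :=
  ((autH H)%:R)^-1 *
    \sum_(s in inj_tuples k m) (MH R H G s * \prod_(u : 'I_k) ((s u \in w) : nat)%:R).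

(* Law of i.i.d. Bernoulli(p) variables {X_v}_{v in V(G)} :
   P(X = 1_w) = p^|w| (1-p)^(m-|w|). *)
Definition bern_weight (R : realType) (m : nat) (p : R) (w : {set 'I_m}) : R :=
  p ^+ #|w| * (1 - p) ^+ (m - #|w|).

Definition Prob (R : realType) (m : nat) (p : R) (E : pred {set 'I_m}) : R :=
  \sum_(w : {set 'I_m} | E w) bern_weight p w.

Definition Expect (R : realType) (m : nat) (p : R) (X : {set 'I_m} -> R) : R :=
  \sum_(w : {set 'I_m}) bern_weight p w * X w.

Definition Variance (R : realType) (m : nat) (p : R) (X : {set 'I_m} -> R) : R :=
  Expect p (fun w => (X w - Expect p X) ^+ 2).

Definition Nhat (R : realType) (k m : nat) (H : rel 'I_k) (G : rel 'I_m) (p : R)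
    (w : {set 'I_m}) : R :=
  (p ^+ k)^-1 * Tcount R H G w.

Definition Zstat (R : realType) (k m : nat) (H : rel 'I_k) (G : rel 'I_m) (p : R)
    (w : {set 'I_m}) : R :=
  (Tcount R H G w - p ^+ k * Ncount R H G) / Num.sqrt (Variance p (Tcount R H G)).

Definition Phi (R : realType) (x : R) : R :=
  fine (normal_prob (0:R) 1 `]-oo, x]).

Definition consistent (R : realType) (k : nat) (H : rel 'I_k) (m : nat -> nat)
    (G : forall n, rel 'I_(m n)) (p : nat -> R) : Prop :=
  forall e : R, 0 < e ->
    (fun n => Prob (p n) (fun w => e < `| Nhat H (G n) (p n) w / Ncount R H (G n) - 1 |))
      @ \oo --> (0 : R).

(* Asymptotic normality: Z -> N(0,1) in distribution (cdf convergence at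
   every point; Phi is continuous). *)
Definition asymp_normal (R : realType) (k : nat) (H : rel 'I_k) (m : nat -> nat)
    (G : forall n, rel 'I_(m n)) (p : nat -> R) : Prop :=
  forall x : R,
    (fun n => Prob (p n) (fun w => Zstat H (G n) (p n) w <= x)) @ \oo --> Phi x.

(* (a) The event {T = 0} contains the event that every labelled copy of H in G misses
   at least one of its k vertices.  These events are down-closed, so by Harris'
   inequality their intersection has probability at least (1 - p^k)^(|Aut H| N), and
   1 - x >= exp (- x / (1 - x)).
   (b) On {T = 0}, of probability at least some d > 0, Nhat / N = 0 and Z takes the value
   z_n = - p^k N / sqrt (Var T).  As Var T >= P(T = 0) (E T)^2 = P(T = 0) (p^k N)^2, z_n
   stays in [-d^(-1/2), d^(-1/2)]: the distribution function of Z_n keeps a jump of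
   size d inside a fixed compact interval, which is incompatible with convergence to
   the 1-Lipschitz Phi. *)

From HB Require Import structures.
From mathcomp Require Import all_boot all_order all_algebra all_fingroup.
From mathcomp Require Import all_classical all_reals all_analysis.
From mathcomp Require Import ring lra measurable_realfun.
Import Order.TTheory GRing.Theory Num.Theory.
Import numFieldTopology.Exports numFieldNormedType.Exports.
Local Open Scope classical_set_scope.
Local Open Scope ring_scope.

Section BernoulliProduct.
Context {R : realType} {m : nat} {p : R}.
Hypotheses (p_ge0 : 0 <= p) (p_le1 : p <= 1).
Implicit Types (S w : {set 'I_m}) (E F : pred {set 'I_m}).

Lemma bern_weight_ge0 w : 0 <= bern_weight p w.
Proof. by rewrite mulr_ge0 // exprn_ge0 // subr_ge0. Qed.

Lemma Prob_ge0 E : 0 <= Prob p E.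
Proof. by rewrite sumr_ge0 // => w _; apply: bern_weight_ge0. Qed.

Lemma eq_Prob E F : E =1 F -> Prob p E = Prob p F.
Proof. by move=> EF; rewrite /Prob (eq_bigl F). Qed.

Lemma Prob_split E F :
  Prob p E = Prob p (fun w => E w && F w) + Prob p (fun w => E w && ~~ F w).
Proof. by rewrite /Prob (bigID F). Qed.

Lemma le_Prob E F : subpred E F -> Prob p E <= Prob p F.
Proof.
move=> EF; rewrite [leRHS](Prob_split F E) -[leLHS]addr0 lerD ?Prob_ge0 //.
rewrite le_eqVlt; apply/orP; left; apply/eqP; apply: eq_Prob => w.
by case: (boolP (E w)) => [/EF ->|]; rewrite ?andbF.
Qed.

Lemma Prob_predT : Prob p (@predT {set 'I_m}) = 1.
Proof.
rewrite /Prob -[RHS](expr1n _ m) -[1 in RHS](subrK p) exprDn.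
rewrite (partition_big (fun w => inord #|w| : 'I_m.+1) predT) //=.
apply: eq_bigr => j _.
rewrite (eq_bigr (fun _ => p ^+ j * (1 - p) ^+ (m - j))); last first.
  by move=> w /eqP <-; rewrite inordK // ltnS -[leqRHS](card_ord m) max_card.
rewrite sumr_const mulrC; congr (_ *+ _).
rewrite -[X in 'C(X, _)](card_ord m) -card_draws; apply: eq_card => w.
rewrite !inE unfold_in /=; apply/eqP/eqP => [<-|->]; rewrite ?inordK //.
by rewrite ltnS -[leqRHS](card_ord m) max_card.
Qed.

Lemma Prob_le1 E : Prob p E <= 1.
Proof. by rewrite -Prob_predT le_Prob. Qed.

Lemma Prob_itv_oc (X : {set 'I_m} -> R) (a b : R) : a <= b ->
  Prob p (fun w => a < X w <= b) = Prob p (fun w => X w <= b) - Prob p (fun w => X w <= a).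
Proof.
move=> ab; apply/eqP; rewrite eq_sym subr_eq addrC.
rewrite (Prob_split (fun w => X w <= b) (fun w => X w <= a)); apply/eqP; congr (_ + _).
  by apply: eq_Prob => w; case: (leP (X w) a) => Xa; rewrite ?andbF ?andbT ?(le_trans Xa ab).
by apply: eq_Prob => w; rewrite -ltNge andbC.
Qed.

Lemma bern_weight_setU1 (v : 'I_m) w : v \notin w ->
  bern_weight p (v |: w) * (1 - p) = p * bern_weight p w.
Proof.
move=> vw; rewrite /bern_weight cardsU1 vw add1n.
have /subnSK <- : (#|w| < m)%N.
  by have := max_card (v |: w); rewrite cardsU1 vw card_ord.
by rewrite exprS exprSr; ring.
Qed.

Definition toggle (v : 'I_m) w := if v \in w then w :\ v else v |: w.

Lemma toggleK v : involutive (toggle v).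
Proof.
move=> w; rewrite /toggle; case: (boolP (v \in w)) => vw; rewrite !inE eqxx /=.
  exact: finset.setD1K.
exact: finset.setU1K.
Qed.

Lemma setU1_toggle v w : v |: toggle v w = v |: w.
Proof. by apply/setP => x; rewrite /toggle; case: ifP; rewrite !inE; case: eqP. Qed.

(* [E (v |: w)] ignores the coordinate [v], hence is independent of [v \in w]. *)
Lemma Prob_in v E :
  Prob p (fun w => E w && (v \in w)) = p * Prob p (fun w => E (v |: w)).
Proof.
pose F w := E (v |: w).
have -> : Prob p (fun w => E w && (v \in w)) = Prob p (fun w => F w && (v \in w)).
  apply: eq_Prob => w; rewrite /F; case: (boolP (v \in w)) => [vw|]; rewrite ?andbF //.
  by congr (E _ && _); apply/esym/finset.setUidPr; rewrite finset.sub1set.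
set B := Prob p _; set A := Prob p (fun w => F w && (v \notin w)).
have AB : B * (1 - p) = p * A.
  rewrite /B /A /Prob (reindex_inj (inv_inj (toggleK v))) /= mulr_suml mulr_sumr.
  rewrite big_mkcond [RHS]big_mkcond; apply: eq_bigr => w _.
  rewrite /F setU1_toggle /toggle; case: (boolP (v \in w)) => vw.
    by rewrite !inE eqxx !andbF.
  by rewrite setU11 andbT; case: (E _); rewrite ?bern_weight_setU1 ?mul0r.
by rewrite (Prob_split F (fun w => v \in w)) -/B -/A mulrDr -AB; ring.
Qed.

Lemma Prob_subset S E :
  Prob p (fun w => E w && (S \subset w)) = p ^+ #|S| * Prob p (fun w => E (S :|: w)).
Proof.
move: {2}#|S| (erefl #|S|) => n; elim: n S E => [|n IH] S E cS.
  move/eqP: cS; rewrite cards_eq0 => /eqP ->; rewrite cards0 expr0 mul1r.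
  by apply: eq_Prob => w; rewrite finset.sub0set finset.set0U andbT.
have [v vS] : exists v, v \in S by apply/set0Pn; rewrite -card_gt0 cS.
set S' := S :\ v; have defS : S = v |: S' by rewrite finset.setD1K.
have cS' : #|S'| = n by move: cS; rewrite (cardsD1 v) vS => -[].
have vS' : v \notin S' by rewrite !inE eqxx.
transitivity (Prob p (fun w => (E w && (v \in w)) && (S' \subset w))).
  by apply: eq_Prob => w; rewrite {1}defS finset.subUset finset.sub1set andbA.
rewrite IH // cS cS' exprS -mulrA mulrCA; congr (_ * _).
transitivity (Prob p (fun w => E (S' :|: w) && (v \in w))).
  by apply: eq_Prob => w; rewrite finset.in_setU (negbTE vS').
rewrite Prob_in; congr (_ * _); apply: eq_Prob => w.
by rewrite defS finset.setUCA finset.setUA.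
Qed.

Lemma Prob_subsetE S : Prob p (fun w => S \subset w) = p ^+ #|S|.
Proof.
transitivity (Prob p (fun w => predT w && (S \subset w))); first exact: eq_Prob.
by rewrite Prob_subset -[RHS]mulr1 -Prob_predT.
Qed.

Definition down_closed (E : pred {set 'I_m}) := forall w w', w \subset w' -> E w' -> E w.

Lemma Prob_subset_down_closed S E : down_closed E ->
  Prob p (fun w => E w && (S \subset w)) <= p ^+ #|S| * Prob p E.
Proof.
move=> dE; rewrite Prob_subset ler_wpM2l ?exprn_ge0 // le_Prob // => w.
by apply: dE; exact: finset.subsetUr.
Qed.

(* Harris' inequality for the down-closed events "[S i] is not contained in [w]". *)
Lemma Prob_avoid_ge (I : Type) (S : I -> {set 'I_m}) (r : seq I) :
  \prod_(i <- r) (1 - p ^+ #|S i|) <= Prob p (fun w => all (fun i => ~~ (S i \subset w)) r).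
Proof.
elim: r => [|i r IH]; first by rewrite big_nil -Prob_predT; apply: le_Prob.
set A := fun w => all _ r in IH *.
have A_down : down_closed A.
  move=> w w' ww'; apply: sub_all => j; apply: contra => Sj.
  exact: fintype.subset_trans ww'.
have A_split := Prob_split A (fun w => S i \subset w).
have A_subset_le := Prob_subset_down_closed (S i) A A_down.
have qi1 : 0 <= 1 - p ^+ #|S i| by rewrite subr_ge0 exprn_ile1.
have -> : Prob p (fun w => all (fun j => ~~ (S j \subset w)) (i :: r))
    = Prob p (fun w => A w && ~~ (S i \subset w)) by apply: eq_Prob => w; exact: andbC.
by rewrite big_cons; apply: le_trans (ler_wpM2l qi1 IH) _; nra.
Qed.

Lemma Variance_ge_Prob_eq0 (X : {set 'I_m} -> R) :
  Prob p (fun w => X w == 0) * Expect p X ^+ 2 <= Variance p X.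
Proof.
rewrite /Variance [X in _ <= X](bigID (fun w => X w == 0)) /= -[leLHS]addr0.
apply: lerD; last by rewrite sumr_ge0 // => w _; rewrite mulr_ge0 ?bern_weight_ge0 ?sqr_ge0.
rewrite /Prob mulr_suml le_eqVlt; apply/orP; left; apply/eqP.
by apply: eq_bigr => w /eqP ->; rewrite sub0r sqrrN.
Qed.

Lemma Prob_eq0_mul_sqr_le1 (X : {set 'I_m} -> R) :
  Prob p (fun w => X w == 0) * (Expect p X / Num.sqrt (Variance p X)) ^+ 2 <= 1.
Proof.
have V_ge0 : 0 <= Variance p X.
  by rewrite sumr_ge0 // => w _; rewrite mulr_ge0 ?bern_weight_ge0 ?sqr_ge0.
rewrite exprMn exprVn sqr_sqrtr //.
have [->|V_neq0] := eqVneq (Variance p X) 0; first by rewrite invr0 !mulr0 ler01.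
rewrite mulrA ler_pdivrMr ?mul1r ?Variance_ge_Prob_eq0 //.
by rewrite lt_neqAle eq_sym V_neq0.
Qed.

End BernoulliProduct.

Lemma expRN_odds_le (R : realType) (q : R) : 0 <= q < 1 -> expR (- (q / (1 - q))) <= 1 - q.
Proof.
case/andP=> q_ge0 q_lt1; have q1_gt0 : 0 < 1 - q by rewrite subr_gt0.
set a := q / (1 - q); have a_ge0 : 0 <= a by rewrite divr_ge0 // ltW.
have a_gt0 : 0 < 1 + a by lra.
have a1 : (1 + a) * (1 - q) = 1 by rewrite mulrDl mul1r divfK ?gt_eqF //; ring.
rewrite -(mulKf (lt0r_neq0 a_gt0) (1 - q)) a1 mulr1 expRN.
by rewrite lef_pV2 ?posrE ?expR_gt0 ?expR_ge1Dx.
Qed.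

Section LabelledCopies.
Variables (R : realType) (k m : nat) (H : rel 'I_k) (G : rel 'I_m).
Implicit Types (s : {ffun 'I_k -> 'I_m}) (w : {set 'I_m}).

Definition tuple_vertices s : {set 'I_m} := [set s u | u : 'I_k].

Definition labelled_copies : {set {ffun 'I_k -> 'I_m}} :=
  [set s in inj_tuples k m | MH R H G s != 0].

Lemma MH_eq0_or1 s : MH R H G s = 0 \/ MH R H G s = 1.
Proof.
apply: (big_ind (fun x : R => x = 0 \/ x = 1)); first by right.
  by move=> x y [->|->] [->|->]; rewrite ?mul0r ?mul1r; [left|left|left|right].
by move=> ij _; case: (G _ _); [right|left].
Qed.

Lemma autH_gt0 : (0 < autH H)%N.
Proof.
apply/card_gt0P; exists 1%g; rewrite inE.
by apply/forallP => i; apply/forallP => j; rewrite !perm1.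
Qed.

Lemma card_labelled_copies : #|labelled_copies|%:R = (autH H)%:R * Ncount R H G.
Proof.
have aut_neq0 : (autH H)%:R != 0 :> R by rewrite pnatr_eq0 -lt0n autH_gt0.
rewrite /Ncount mulrA mulfV // mul1r.
rewrite (bigID (fun s => MH R H G s != 0)) /= [X in _ + X]big1 ?addr0; last first.
  by move=> s /andP[_ /negPn/eqP].
rewrite [RHS](eq_bigl (fun s => s \in labelled_copies)) => [|s]; last by rewrite [in RHS]inE.
rewrite (eq_bigr (fun _ => 1)); last first.
  by move=> s; rewrite inE => /andP[_]; case: (MH_eq0_or1 s) => ->; rewrite ?eqxx.
by rewrite sumr_const.
Qed.

Lemma prod_mem_indicator s w :
  \prod_(u : 'I_k) (((s u \in w) : nat)%:R : R) = ((tuple_vertices s \subset w) : nat)%:R.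
Proof.
have [sw|] := boolP (tuple_vertices s \subset w).
  by rewrite big1 // => u _; rewrite (fintype.subsetP sw) ?imset_f.
case/fintype.subsetPn => _ /imsetP[u _ ->] su.
by rewrite (bigD1 u) //= (negbTE su) mul0r.
Qed.

Lemma card_tuple_vertices s : s \in inj_tuples k m -> #|tuple_vertices s| = k.
Proof. by rewrite inE => /injectiveP s_inj; rewrite card_imset // card_ord. Qed.

Lemma Tcount_eq0 w :
  (forall s, s \in labelled_copies -> ~~ (tuple_vertices s \subset w)) -> Tcount R H G w = 0.
Proof.
move=> avoid; rewrite /Tcount big1 ?mulr0 // => s s_inj.
rewrite prod_mem_indicator; case: (MH_eq0_or1 s) => Ms; rewrite Ms ?mul0r //.
have s_copy : s \in labelled_copies by rewrite inE s_inj Ms oner_neq0.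
by rewrite (negbTE (avoid s s_copy)) mulr0.
Qed.

Lemma Expect_Tcount (p : R) : 0 <= p -> p <= 1 ->
  Expect p (Tcount R H G) = p ^+ k * Ncount R H G.
Proof.
move=> p_ge0 p_le1; rewrite /Expect /Tcount /Ncount mulrCA.
under eq_bigr do rewrite mulrCA; rewrite -mulr_sumr; congr (_ * _).
rewrite mulr_sumr; under eq_bigr do rewrite mulr_sumr.
rewrite exchange_big /=; apply: eq_bigr => s s_inj.
have -> : p ^+ k = Prob p (fun w => tuple_vertices s \subset w).
  by rewrite Prob_subsetE // card_tuple_vertices.
rewrite /Prob mulr_suml [RHS]big_mkcond /=; apply: eq_bigr => w _.
by rewrite prod_mem_indicator; case: (_ \subset _); rewrite ?mulr0 ?mulr1.
Qed.

Lemma Prob_Tcount_eq0_ge (p q : R) : (0 < k)%N -> 0 <= p -> p <= q -> q < 1 ->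
  expR (- ((autH H)%:R / (1 - q ^+ k) * p ^+ k * Ncount R H G))
    <= Prob p (fun w => Tcount R H G w == 0).
Proof.
move=> k_gt0 p_ge0 pq q_lt1; have p_le1 : p <= 1 by rewrite ltW ?(le_lt_trans pq).
have q_ge0 : 0 <= q := le_trans p_ge0 pq.
have pk_le_qk : p ^+ k <= q ^+ k by rewrite lerXn2r.
have qk_lt1 : q ^+ k < 1 by rewrite exprn_ilt1 // -lt0n.
have pk_lt1 : p ^+ k < 1 := le_lt_trans pk_le_qk qk_lt1.
have harris := Prob_avoid_ge p_ge0 p_le1 _ tuple_vertices (enum labelled_copies).
apply: le_trans (le_trans _ harris) _; last first.
  apply: (le_Prob p_ge0 p_le1) => w /seq.allP avoid; apply/eqP/Tcount_eq0 => s s_copy.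
  by apply: avoid; rewrite mem_enum.
rewrite big_enum /= (eq_bigr (fun _ => 1 - p ^+ k)); last first.
  by move=> s; rewrite inE => /andP[/card_tuple_vertices ->].
rewrite prodr_const.
apply: le_trans (_ : expR (- (p ^+ k / (1 - p ^+ k))) ^+ #|labelled_copies| <= _).
  rewrite -expRM_natl ler_expR mulrN lerN2.
  have -> : (autH H)%:R / (1 - q ^+ k) * p ^+ k * Ncount R H G
      = #|labelled_copies|%:R * (p ^+ k / (1 - q ^+ k)) by rewrite card_labelled_copies; ring.
  rewrite ler_wpM2l // ler_wpM2l ?exprn_ge0 // lef_pV2 ?posrE ?subr_gt0 //.
  by rewrite lerB.
rewrite lerXn2r ?nnegrE ?expR_ge0 ?subr_ge0 ?(ltW pk_lt1) //.
by rewrite expRN_odds_le // exprn_ge0.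
Qed.

End LabelledCopies.

Section LimitsOfSequences.
Context {R : realType}.
Implicit Types (u : R^nat) (q : R).

Lemma bounded_fun_01 u : (forall n, 0 <= u n <= 1) -> bounded_fun u.
Proof.
move=> u01; rewrite /bounded_fun /bounded_near; near=> M => n _.
by have /andP[u_ge0 u_le1] := u01 n; rewrite /= ger0_norm // (le_trans u_le1).
Unshelve. all: by end_near.
Qed.

Lemma limn_sup_lt_near u q : bounded_fun u -> limn_sup u < q -> \forall n \near \oo, u n < q.
Proof.
move=> u_bnd; rewrite limn_supE //.
case/inf_lt; first by exists (sups u 0); exists 0%N.
move=> _ [n0 _ <-] sup_lt; exists n0 => // n /= n0n; apply: le_lt_trans sup_lt.
apply: ub_le_sup; last by exists n.
exact/has_ubound_sdrop/bounded_fun_has_ubound.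
Qed.

Lemma limn_inf_gt_near u q : bounded_fun u -> q < limn_inf u -> \forall n \near \oo, q < u n.
Proof.
move=> u_bnd; rewrite limn_infE //.
case/sup_gt; first by exists (infs u 0); exists 0%N.
move=> _ [n0 _ <-] inf_gt; exists n0 => // n /= n0n; apply: lt_le_trans inf_gt _.
apply: ge_inf; last by exists n.
exact/has_lbound_sdrop/bounded_fun_has_lbound.
Qed.

Lemma limn_inf_gt0_near u : bounded_fun u -> 0 < limn_inf u ->
  exists2 d, 0 < d & \forall n \near \oo, d <= u n.
Proof.
move=> u_bnd inf_gt0; exists (limn_inf u / 2); first by rewrite divr_gt0.
apply: filterS (limn_inf_gt_near _ (limn_inf u / 2) u_bnd _) => [n /ltW //|].
by rewrite ltr_pdivrMr // ltr_pMr // ltr1n.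
Qed.

End LimitsOfSequences.

Lemma Prob_Tcount_eq0_ge_near (R : realType) (k : nat) (H : rel 'I_k) (m : nat -> nat)
    (G : forall n, rel 'I_(m n)) (p : nat -> R) (q : R) :
  (0 < k)%N -> (forall n, 0 <= p n <= 1) -> limn_sup p < q -> q < 1 ->
  \forall n \near \oo, expR (- ((autH H)%:R / (1 - q ^+ k) * p n ^+ k * Ncount R H (G n)))
    <= Prob (p n) (fun w => Tcount R H (G n) w == 0).
Proof.
move=> k_gt0 p01 sup_lt q_lt1.
apply: filterS (limn_sup_lt_near _ _ (bounded_fun_01 _ p01) sup_lt) => n /ltW pq.
by have /andP[pn_ge0 _] := p01 n; exact: Prob_Tcount_eq0_ge.
Qed.

Lemma exists_step_crossing (R : realType) (f : nat -> R) (z : R) (M : nat) :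
  f 0%N < z -> z <= f M -> exists2 j, (j < M)%N & f j < z <= f j.+1.
Proof.
elim: M => [|M IH] f0_lt fM_ge; first by move: (lt_le_trans f0_lt fM_ge); rewrite ltxx.
have [fM_lt|fM_ge'] := ltP (f M) z; first by exists M; rewrite ?fM_lt.
by have [j jM fj] := IH f0_lt fM_ge'; exists j; rewrite ?(ltn_trans jM).
Qed.

(* Compare [F n] and [Phi] on a grid of mesh [d / 4] covering [[-B, B]]. *)
Lemma jumps_not_cvg_Lipschitz (R : realType) (F : nat -> R -> R) (Phi : R -> R) (B d : R) :
  0 < d -> (forall a b, a <= b -> Phi b - Phi a <= b - a) ->
  (forall x, (fun n => F n x) @ \oo --> Phi x) ->
  ~ \forall n \near \oo, exists2 z, `|z| <= B & forall a b, a < z <= b -> d <= F n b - F n a.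
Proof.
move=> d_gt0 Phi_lip F_cvg jumps; pose h := d / 4; have h_gt0 : 0 < h by rewrite divr_gt0.
pose M := Num.Def.archi_bound ((2 * `|B| + 2) / h).
have hM : (2 * `|B| + 2) / h < M%:R.
  by apply: archi_boundP; rewrite divr_ge0 ?ltW // addr_ge0 ?mulr_ge0.
pose x j := - (`|B| + 1) + j%:R * h.
have xS j : x j.+1 = x j + h by rewrite /x -natr1 mulrDl mul1r addrA.
have grid_close : \forall n \near \oo, forall j : 'I_M.+1, `|Phi (x j) - F n (x j)| < h.
  by apply: filter_forall => j; exact: cvgr_dist_lt.
suff : \forall n \near \oo, False by case/filter_ex.
near=> n.
have [z zB jump] : exists2 z, `|z| <= B & forall a b, a < z <= b -> d <= F n b - F n a.
  by near: n; exact: jumps.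
have close : forall j : 'I_M.+1, `|Phi (x j) - F n (x j)| < h by near: n; exact: grid_close.
have [j jM /andP[xj_lt xj1_ge]] : exists2 j, (j < M)%N & x j < z <= x j.+1.
  have := ler_norm B; move: hM zB; rewrite /x ltr_pdivrMr // ler_norml => hM zB B_le.
  by apply: exists_step_crossing; rewrite ?mul0r; lra.
have := jump _ _ (introT andP (conj xj_lt xj1_ge)).
have := close (Ordinal (ltn_trans jM (ltnSn M))); have := close (Ordinal (jM : (j.+1 < M.+1)%N)).
have := Phi_lip _ _ (ltW (lt_le_trans xj_lt xj1_ge)).
rewrite /= !ltr_norml xS /h; lra.
Unshelve. all: by end_near.
Qed.

Section StandardNormal.
Context {R : realType}.
Local Notation mu := (normal_prob (0 : R) 1).

Lemma normal_peak1_le1 : normal_peak (1 : R) <= 1.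
Proof.
have pi_ge : 1 <= 1 ^+ 2 * pi *+ 2 :> R by rewrite expr1n mul1r mulr2n; have := pi_ge2 R; lra.
rewrite /normal_peak invf_le1; first by rewrite -[leLHS]sqrtr1 ler_wsqrtr.
by rewrite sqrtr_gt0 (lt_le_trans ltr01 pi_ge).
Qed.

Lemma normal_prob_itv_oc_le (a b : R) : a <= b -> (mu `]a, b] <= (b - a)%:E)%E.
Proof.
move=> ab.
apply: (@le_trans _ _ (\int[lebesgue_measure]_(x in `]a, b]) (normal_peak (1 : R))%:E)%E).
  apply: ge0_le_integral => //.
  - by move=> x _; rewrite lee_fin normal_pdf_ge0.
  - by apply/measurable_EFinP; apply: measurable_funTS; exact: measurable_normal_pdf.
  - by move=> x _; rewrite lee_fin normal_pdf_ub // oner_neq0.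
rewrite integral_cst // [X in (_ * X)%E]lebesgue_measure_itv /= lte_fin.
case: ltP => [_|]; last by rewrite mule0 lee_fin subr_ge0.
by rewrite -EFinD -EFinM lee_fin ler_piMl ?subr_ge0 ?normal_peak1_le1.
Qed.

Lemma Phi_Lipschitz (a b : R) : a <= b -> Phi b - Phi a <= b - a.
Proof.
move=> ab; rewrite /Phi.
have mB : measurable [set` `]-oo, b]] by exact: measurable_itv.
have mA : measurable [set` `]-oo, a]] by exact: measurable_itv.
have := measureDI mu mB mA.
have -> : [set` `]-oo, b]] `&` [set` `]-oo, a]] = [set` `]-oo, a]] :> set R.
  by apply: setIidr => x /=; rewrite !in_itv /= => xa; exact: le_trans xa ab.
have -> : [set` `]-oo, b]] `\` [set` `]-oo, a]] = [set` `]a, b]] :> set R.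
  apply/seteqP; split => x /=; rewrite !in_itv /= ?ltNge.
    by move=> [-> /negP ->].
  by move=> /andP[/negP xa ->].
have fin_oc : mu `]a, b] \is a fin_num by apply: fin_num_measure; exact: measurable_itv.
have fin_a : mu `]-oo, a] \is a fin_num by apply: fin_num_measure; exact: measurable_itv.
move=> ->; rewrite fineD // addrK -lee_fin fineK //.
exact: normal_prob_itv_oc_le.
Qed.

End StandardNormal.

Section ZeroCountObstructions.
Context {R : realType} {k : nat} {H : rel 'I_k} {m : nat -> nat} {G : forall n, rel 'I_(m n)}.
Context {p : nat -> R} {d : R}.
Hypotheses (p01 : forall n, 0 <= p n <= 1) (d_gt0 : 0 < d).
Hypothesis Prob_T0_ge : \forall n \near \oo, d <= Prob (p n) (fun w => Tcount R H (G n) w == 0).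

Lemma not_consistent_of_Prob_T0 : ~ consistent H G p.
Proof.
move=> cons; have half_gt0 : 0 < 1 / 2 :> R by lra.
have small := cvgr0_norm_lt _ (cons _ half_gt0) _ d_gt0.
suff : \forall n \near \oo, False by case/filter_ex.
near=> n; have /andP[pn_ge0 pn_le1] := p01 n.
have : d <= Prob (p n) (fun w => Tcount R H (G n) w == 0) by near: n.
have : `|Prob (p n) (fun w => 1 / 2 < `|Nhat H (G n) (p n) w / Ncount R H (G n) - 1|)| < d.
  by near: n; exact: small.
have : Prob (p n) (fun w => Tcount R H (G n) w == 0)
    <= Prob (p n) (fun w => 1 / 2 < `|Nhat H (G n) (p n) w / Ncount R H (G n) - 1|).
  apply: le_Prob => // w /eqP T0; rewrite /Nhat T0 mulr0 mul0r sub0r normrN normr1; lra.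
rewrite ger0_norm ?Prob_ge0 //; lra.
Unshelve. all: by end_near.
Qed.

Lemma not_asymp_normal_of_Prob_T0 : ~ asymp_normal H G p.
Proof.
move=> normal.
pose F n x := Prob (p n) (fun w => Zstat H (G n) (p n) w <= x).
apply: (@jumps_not_cvg_Lipschitz R F _ (Num.sqrt d^-1) d d_gt0 Phi_Lipschitz normal).
near=> n; have /andP[pn_ge0 pn_le1] := p01 n.
have P0_ge : d <= Prob (p n) (fun w => Tcount R H (G n) w == 0) by near: n.
exists ((0 - p n ^+ k * Ncount R H (G n)) / Num.sqrt (Variance (p n) (Tcount R H (G n)))).
  rewrite -sqrtr_sqr ler_wsqrtr // -[d^-1]mul1r ler_pdivlMr //.
  have := Prob_eq0_mul_sqr_le1 pn_ge0 pn_le1 (Tcount R H (G n)).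
  rewrite Expect_Tcount // sub0r mulNr sqrrN mulrC; apply: le_trans.
  by rewrite ler_wpM2l ?sqr_ge0.
move=> a b /andP[za zb]; rewrite /F -Prob_itv_oc //; last exact: ltW (lt_le_trans za zb).
apply: le_trans P0_ge _; apply: le_Prob => // w /eqP T0.
by rewrite /Zstat T0 za zb.
Unshelve. all: by end_near.
Qed.

End ZeroCountObstructions.

Theorem lemma6p1 (R : realType) (k : nat) (H : rel 'I_k) :
  simple_graph H -> connected_graph H ->
  (* (a): c depends only on H and on limsup p_n *)
  (exists c : R -> R,
    forall (m : nat -> nat) (G : forall n, rel 'I_(m n)) (p : nat -> R),
      (forall n, simple_graph (G n)) ->
      (forall n, 0 < Ncount R H (G n)) ->
      (forall n, 0 < p n < 1) ->
      limn_sup p < 1 ->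
      0 < c (limn_sup p) /\
      \forall n \near \oo,
        expR (- (c (limn_sup p) * p n ^+ k * Ncount R H (G n)))
          <= Prob (p n) (fun w => Tcount R H (G n) w == 0))
  /\
  (* (b) *)
  (forall (m : nat -> nat) (G : forall n, rel 'I_(m n)) (p : nat -> R),
      (forall n, simple_graph (G n)) ->
      (forall n, 0 < Ncount R H (G n)) ->
      (forall n, 0 < p n < 1) ->
      limn_sup p < 1 ->
      0 < limn_inf (fun n => Prob (p n) (fun w => Tcount R H (G n) w == 0)) ->
      ~ consistent H G p /\ ~ asymp_normal H G p).
Proof.
move=> _ [k_gt0 _].
have p01 (p : nat -> R) : (forall n, 0 < p n < 1) -> forall n, 0 <= p n <= 1.
  by move=> p_in n; have /andP[? ?] := p_in n; rewrite !ltW.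
split.
  exists (fun L => (autH H)%:R / (1 - Num.max 0 ((1 + L) / 2) ^+ k)).
  move=> m G p _ _ p_in L_lt1; set L := limn_sup p in L_lt1 *.
  set q := Num.max 0 ((1 + L) / 2); have q_lt1 : q < 1 by rewrite gt_max ltr01 /=; lra.
  have L_lt_q : L < q by rewrite lt_max; apply/orP; right; lra.
  split; first by rewrite divr_gt0 ?ltr0n ?autH_gt0 // subr_gt0 exprn_ilt1 ?le_max ?lexx // -lt0n.
  exact: Prob_Tcount_eq0_ge_near k_gt0 (p01 p p_in) L_lt_q q_lt1.
move=> m G p _ _ p_in _ P0_pos.
have P0_01 n : 0 <= Prob (p n) (fun w => Tcount R H (G n) w == 0) <= 1.
  by have /andP[? ?] := p01 p p_in n; rewrite Prob_ge0 ?Prob_le1.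
have [d d_gt0 P0_ge] := limn_inf_gt0_near _ (bounded_fun_01 _ P0_01) P0_pos.
split; first exact: (not_consistent_of_Prob_T0 (p01 p p_in) d_gt0 P0_ge).
exact: (not_asymp_normal_of_Prob_T0 (p01 p p_in) d_gt0 P0_ge).
Qed.
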